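(* Let $f_V^0(u)=(32u^2-1)\cos2u+\cos6u-8u\sin2u$ and let $F[f_V^0]=\inf\{u>0:f_V^0(u)=0\}$ be its first positive root. Then $F[f_V^0]\in(\frac58\pi,\frac34\pi)$, $f_V^0$ has a simple root at $F[f_V^0]$, and $f_V^0(u)<0$ for all $u\in(0,F[f_V^0])$. *)

From Stdlib Require Import Reals.
Open Scope R_scope.

Definition fV0 (u : R) : R :=
  (32 * u ^ 2 - 1) * cos (2 * u) + cos (6 * u) - 8 * u * sin (2 * u).

Definition posRoots (u : R) : Prop := 0 < u /\ fV0 u = 0.

Definition is_glb (E : R -> Prop) (m : R) : Prop :=
  (forall x, E x -> m <= x) /\ (forall b, (forall x, E x -> b <= x) -> b <= m).

(* With x = 2u and cos 6u = 4 cos^3 2u - 3 cos 2u one gets fV0 u = 4 gV (2u), where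
   gV x = (2x^2 - 1) cos x + cos^3 x - x sin x = cos x (2x^2 - sin^2 x) - x sin x.
   A sign analysis of the second form shows gV < 0 on (0, 5pi/4] (Taylor bounds of
   sin and cos near 0, the signs of sin and cos beyond).  On [5pi/4, 3pi/2] the
   derivative of gV is positive and gV (3pi/2) > 0, so gV has exactly one root there,
   which is simple; halving it gives the first positive root of fV0. *)

From Stdlib Require Import Reals.
Open Scope R_scope.
From Stdlib Require Import Lra Psatz.
From Coquelicot Require Import Coquelicot.

Definition gV (x : R) : R := (2 * x ^ 2 - 1) * cos x + cos x ^ 3 - x * sin x.

Definition gV' (x : R) : R := 3 * x * cos x - 2 * x ^ 2 * sin x - 3 * cos x ^ 2 * sin x.

Lemma PI_gt_3 : 3 < PI.
Proof. pose proof PI2_3_2; lra. Qed.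

Lemma sin2_cos2_pow (x : R) : sin x ^ 2 + cos x ^ 2 = 1.
Proof. rewrite <- (sin2_cos2 x); unfold Rsqr; ring. Qed.

Lemma fV0_gV (u : R) : fV0 u = 4 * gV (2 * u).
Proof.
  unfold fV0, gV.
  replace (6 * u) with (2 * u + 2 * u + 2 * u) by ring.
  rewrite !cos_plus, !sin_plus.
  pose proof (sin2_cos2_pow (2 * u)) as Hsc.
  set (c := cos (2 * u)) in *; set (s := sin (2 * u)) in *.
  apply Rminus_diag_uniq.
  match goal with |- ?l - ?r = 0 =>
    replace (l - r) with (3 * c * (1 - (s ^ 2 + c ^ 2))) by ring end.
  rewrite Hsc; ring.
Qed.

Lemma gV_derive (x : R) : derivable_pt_lim gV x (gV' x).
Proof. apply is_derive_Reals; unfold gV, gV'; auto_derive; [easy | ring]. Qed.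

Lemma gV_continuity : continuity gV.
Proof. intro x; apply derivable_continuous_pt; exists (gV' x); apply gV_derive. Qed.

Lemma fV0_derive (u : R) : derivable_pt_lim fV0 u (8 * gV' (2 * u)).
Proof.
  apply is_derive_Reals.
  apply (is_derive_ext (fun t => 4 * gV (2 * t))); [intro t; symmetry; apply fV0_gV |].
  replace (8 * gV' (2 * u)) with (4 * (2 * gV' (2 * u))) by ring.
  apply is_derive_scal, (is_derive_comp gV (fun t => 2 * t)).
  - apply is_derive_Reals, gV_derive.
  - auto_derive; [easy | ring].
Qed.

Lemma gV_sin_cos (x : R) : gV x = cos x * (2 * x ^ 2 - sin x ^ 2) - x * sin x.
Proof.
  unfold gV; pose proof (sin2_cos2_pow x) as Hsc.
  replace (cos x ^ 3) with (cos x * (1 - sin x ^ 2)) by (rewrite <- Hsc; ring); ring.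
Qed.

Lemma gV_shift_PI (y : R) :
  gV (y + PI) = - cos y * (2 * (y + PI) ^ 2 - sin y ^ 2) + (y + PI) * sin y.
Proof. rewrite gV_sin_cos, neg_sin, neg_cos; ring. Qed.

Lemma sin_ge_cubic (x : R) : 0 <= x <= PI -> x - x ^ 3 / 6 <= sin x.
Proof.
  intros Hx; destruct (sin_bound x 0 ltac:(lra) ltac:(lra)) as [Hs _].
  unfold sin_approx, sin_term in Hs; simpl in Hs; lra.
Qed.

Lemma cos_le_quartic (x : R) : - PI / 2 <= x <= PI / 2 -> cos x <= 1 - x ^ 2 / 2 + x ^ 4 / 24.
Proof.
  intros Hx; destruct (cos_bound x 0 (proj1 Hx) (proj2 Hx)) as [_ Hc].
  unfold cos_approx, cos_term in Hc; simpl in Hc; lra.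
Qed.

Lemma gV_neg_0_PI2 (x : R) : 0 < x <= PI / 2 -> gV x < 0.
Proof.
  intros Hx; pose proof PI_gt_3; pose proof PI_4.
  rewrite gV_sin_cos.
  set (S := x - x ^ 3 / 6); set (C := 1 - x ^ 2 / 2 + x ^ 4 / 24).
  assert (HS : S <= sin x) by (apply sin_ge_cubic; lra).
  assert (HC : cos x <= C) by (apply cos_le_quartic; lra).
  assert (Hx2 : x ^ 2 <= 4) by nra.
  assert (HS0 : 0 < S) by (unfold S; nra).
  assert (HC0 : 0 <= C) by (pose proof (cos_ge_0 x ltac:(lra) ltac:(lra)); lra).
  assert (Hsx : sin x <= x) by (apply Rlt_le, sin_lt_x; lra).
  assert (Hsq : S ^ 2 <= sin x ^ 2 <= x ^ 2) by (split; apply pow_incr; lra).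
  (* replace cos x and sin x by their Taylor bounds, each in the unfavourable direction *)
  assert (Hcos : cos x * (2 * x ^ 2 - sin x ^ 2) <= C * (2 * x ^ 2 - sin x ^ 2))
    by (apply Rmult_le_compat_r; nra).
  assert (Hbound : cos x * (2 * x ^ 2 - sin x ^ 2) - x * sin x
                   <= C * (2 * x ^ 2 - S ^ 2) - x * S) by nra.
  assert (Hpoly : C * (2 * x ^ 2 - S ^ 2) - x * S
                  = x ^ 6 * (- 11 / 72 + x ^ 2 / 36 - x ^ 4 / 864))
    by (unfold C, S; field).
  assert (Hx6 : 0 < x ^ 6) by (apply pow_lt; lra).
  nra.
Qed.

Lemma gV_neg_PI2_PI (x : R) : PI / 2 < x <= PI -> gV x < 0.
Proof.
  intros Hx; pose proof PI_gt_3; rewrite gV_sin_cos.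
  assert (Hc : cos x < 0) by (apply cos_lt_0; lra).
  assert (Hs : 0 <= sin x) by (apply sin_ge_0; lra).
  assert (Hs2 : sin x ^ 2 <= 1) by (pose proof (sin2_cos2_pow x); nra).
  assert (Hcos : cos x * (2 * x ^ 2 - sin x ^ 2) < 0) by (apply Rmult_neg_pos; nra).
  assert (Hsin : 0 <= x * sin x) by (apply Rmult_le_pos; lra).
  lra.
Qed.

Lemma gV_neg_PI_5PI4 (x : R) : PI <= x <= 5 * PI / 4 -> gV x < 0.
Proof.
  intros Hx; pose proof PI_gt_3.
  replace x with ((x - PI) + PI) by ring; rewrite gV_shift_PI.
  set (y := x - PI) in *; replace (y + PI) with x by (unfold y; ring).
  assert (Hs : 0 <= sin y) by (apply sin_ge_0; unfold y; lra).
  assert (Hc : 0 < cos y) by (apply cos_gt_0; unfold y; lra).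
  assert (Hsc : sin y <= cos y) by (rewrite <- sin_shift; apply sin_incr_1; unfold y; lra).
  assert (Hs2 : sin y ^ 2 <= 1) by (pose proof (SIN_bound y); nra).
  assert (Hq : x + 1 <= 2 * x ^ 2 - sin y ^ 2) by nra.
  assert (Hcos : cos y * (x + 1) <= cos y * (2 * x ^ 2 - sin y ^ 2))
    by (apply Rmult_le_compat_l; lra).
  assert (Hsin : x * sin y <= x * cos y) by (apply Rmult_le_compat_l; lra).
  lra.
Qed.

Lemma gV_neg (x : R) : 0 < x <= 5 * PI / 4 -> gV x < 0.
Proof.
  intros Hx.
  destruct (Rle_lt_dec x (PI / 2)); [apply gV_neg_0_PI2; lra |].
  destruct (Rle_lt_dec x PI); [apply gV_neg_PI2_PI | apply gV_neg_PI_5PI4]; lra.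
Qed.

Lemma gV'_pos (x : R) : 5 * PI / 4 <= x <= 3 * (PI / 2) -> 0 < gV' x.
Proof.
  intros Hx; pose proof PI_gt_3; unfold gV'.
  replace x with ((x - PI) + PI) by ring; rewrite neg_sin, neg_cos.
  set (y := x - PI) in *; replace (y + PI) with x by (unfold y; ring).
  assert (Hs : 0 < sin y) by (apply sin_gt_0; unfold y; lra).
  assert (Hc : 0 <= cos y) by (apply cos_ge_0; unfold y; lra).
  assert (Hcs : cos y <= sin y) by (rewrite <- sin_shift; apply sin_incr_1; unfold y; lra).
  assert (Hmain : 0 < x * sin y * (2 * x - 3))
    by (apply Rmult_lt_0_compat; [apply Rmult_lt_0_compat |]; lra).
  assert (Hcube : 0 <= cos y ^ 2 * sin y) by (apply Rmult_le_pos; nra).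
  assert (Hcross : x * cos y <= x * sin y) by (apply Rmult_le_compat_l; lra).
  nra.
Qed.

Lemma gV_3PI2_pos : 0 < gV (3 * (PI / 2)).
Proof. unfold gV; rewrite cos_3PI2, sin_3PI2; pose proof PI_gt_3; nra. Qed.

Lemma gV_increasing (x y : R) :
  5 * PI / 4 <= x -> x < y -> y <= 3 * (PI / 2) -> gV x < gV y.
Proof.
  intros Hx Hxy Hy.
  destruct (MVT_cor2 gV gV' x y Hxy) as [c [Hmvt Hc]]; [intros; apply gV_derive |].
  pose proof (gV'_pos c ltac:(lra)); nra.
Qed.

Lemma first_root_of_sign_change (g : R -> R) (a b : R) :
  continuity g -> 0 < a < b -> (forall x, 0 < x <= a -> g x < 0) ->
  (forall x y, a <= x -> x < y -> y <= b -> g x < g y) -> 0 < g b ->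
  exists r, a < r < b /\ g r = 0 /\ forall x, 0 < x < r -> g x < 0.
Proof.
  intros Hg Hab Hneg Hincr Hb.
  assert (Ha : g a < 0) by (apply Hneg; lra).
  destruct (IVT g a b Hg ltac:(lra) Ha Hb) as [r [[Har Hrb] Hgr]].
  assert (Hr : a < r < b).
  { split; apply Rnot_le_lt; intro Hc.
    - replace r with a in Hgr by lra; lra.
    - replace r with b in Hgr by lra; lra. }
  exists r; split; [exact Hr | split; [exact Hgr |]].
  intros x Hx; destruct (Rle_lt_dec x a); [apply Hneg; lra |].
  rewrite <- Hgr; apply Hincr; lra.
Qed.

Lemma is_glb_least (E : R -> Prop) (m : R) :
  E m -> (forall x, E x -> m <= x) -> is_glb E m.
Proof. intros Hm Hlow; split; [exact Hlow | intros b Hb; apply Hb, Hm]. Qed.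

Theorem lemma5p2 :
  exists F : R,
    is_glb posRoots F /\
    5 / 8 * PI < F < 3 / 4 * PI /\
    fV0 F = 0 /\
    (exists d : R, derivable_pt_lim fV0 F d /\ d <> 0) /\
    (forall u : R, 0 < u < F -> fV0 u < 0).
Proof.
  pose proof PI_gt_3.
  destruct (first_root_of_sign_change gV (5 * PI / 4) (3 * (PI / 2)) gV_continuity
              ltac:(lra) gV_neg gV_increasing gV_3PI2_pos) as [r [Hr [Hgr Hneg]]].
  assert (Hroot : fV0 (r / 2) = 0)
    by (rewrite fV0_gV; replace (2 * (r / 2)) with r by field; lra).
  assert (Hbelow : forall u, 0 < u < r / 2 -> fV0 u < 0)
    by (intros u Hu; rewrite fV0_gV; pose proof (Hneg (2 * u) ltac:(lra)); lra).
  exists (r / 2); split; [| split; [lra | split; [exact Hroot | split; [| exact Hbelow]]]].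
  - apply is_glb_least; [split; [lra | exact Hroot] |].
    intros x [Hx Hfx]; apply Rnot_lt_le; intro Hxr; pose proof (Hbelow x ltac:(lra)); lra.
  - exists (8 * gV' (2 * (r / 2))); split; [apply fV0_derive |].
    replace (2 * (r / 2)) with r by field; pose proof (gV'_pos r ltac:(lra)); lra.
Qed.
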